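(* Let $G$ be a group, $S\subseteq G$ a subset and $H$ a subgroup of $G$. Suppose the composite map $S\hookrightarrow G\to G/H$ is surjective and at least one fibre of this map contains exactly one element. Then $H$ is a minimal complement of $S$ in $G$.
   Context: $G/H$ denotes the set of left cosets $gH$, i.e. classes of the relation $g_1\sim g_2$ iff $g_1^{-1}g_2\in H$. A nonempty $W'\subseteq G$ is a complement to $W$ if $WW'=G$; it is minimal if no proper subset of $W'$ is a complement to $W$. *)

Set Implicit Arguments.

Record is_group (G : Type) (mul : G -> G -> G) (one : G) (inv : G -> G) : Prop := {
  mulA  : forall x y z, mul x (mul y z) = mul (mul x y) z;
  mul1g : forall x, mul one x = x;
  mulg1 : forall x, mul x one = x;
  mulVg : forall x, mul (inv x) x = one;
  mulgV : forall x, mul x (inv x) = one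
}.

Definition is_subgroup (G : Type) (mul : G -> G -> G) (one : G) (inv : G -> G)
  (H : G -> Prop) : Prop :=
  H one /\ (forall x y, H x -> H y -> H (mul x y)) /\ (forall x, H x -> H (inv x)).

Definition setmul (G : Type) (mul : G -> G -> G) (A B : G -> Prop) (g : G) : Prop :=
  exists a b, A a /\ B b /\ g = mul a b.

Definition is_complement (G : Type) (mul : G -> G -> G) (W W' : G -> Prop) : Prop :=
  (exists x, W' x) /\ (forall g, setmul mul W W' g).

Definition is_minimal_complement (G : Type) (mul : G -> G -> G) (W W' : G -> Prop) : Prop :=
  is_complement mul W W' /\
  forall W'' : G -> Prop,
    (forall x, W'' x -> W' x) -> (exists x, W' x /\ ~ W'' x) ->
    ~ is_complement mul W W''.

Definition same_lcoset (G : Type) (mul : G -> G -> G) (inv : G -> G)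
  (H : G -> Prop) (g1 g2 : G) : Prop := H (mul (inv g1) g2).

(* Surjectivity of S -> G/H means every coset g H contains some s with
   g = s h, so S H = G.  If s0 is alone in its fibre and W ⊆ H is another
   complement, write s0 h = s w with h in H and w in W: then s lies in the
   coset s0 H, hence s = s0 and h = w, so W = H. *)


Set Implicit Arguments.

Section LeftCosets.

Variables (G : Type) (mul : G -> G -> G) (one : G) (inv : G -> G).
Hypothesis hG : is_group mul one inv.

Lemma mulKg (a x : G) : mul (inv a) (mul a x) = x.
Proof. now rewrite (mulA hG), (mulVg hG), (mul1g hG). Qed.

Lemma mulKVg (a x : G) : mul a (mul (inv a) x) = x.
Proof. now rewrite (mulA hG), (mulgV hG), (mul1g hG). Qed.

Lemma mulg_cancel_l (a x y : G) : mul a x = mul a y -> x = y.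
Proof. intros E. now rewrite <- (mulKg a x), <- (mulKg a y), E. Qed.

Variable H : G -> Prop.
Hypothesis hH : is_subgroup mul one inv H.

Lemma same_lcoset_mulr (g h : G) : H h -> same_lcoset mul inv H g (mul g h).
Proof. intros Hh. unfold same_lcoset. now rewrite mulKg. Qed.

Lemma same_lcoset_sym {g1 g2 : G} :
  same_lcoset mul inv H g1 g2 -> same_lcoset mul inv H g2 g1.
Proof.
  destruct hH as (_ & _ & HV). unfold same_lcoset. intros E.
  replace (mul (inv g2) g1) with (inv (mul (inv g1) g2)); [now apply HV|].
  apply mulg_cancel_l with (a := mul (inv g1) g2).
  now rewrite (mulgV hG), <- (mulA hG), mulKVg, (mulVg hG).
Qed.

Lemma same_lcoset_trans {g1 g2 g3 : G} :
  same_lcoset mul inv H g1 g2 -> same_lcoset mul inv H g2 g3 ->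
  same_lcoset mul inv H g1 g3.
Proof.
  destruct hH as (_ & HM & _). unfold same_lcoset. intros E12 E23.
  replace (mul (inv g1) g3) with (mul (mul (inv g1) g2) (mul (inv g2) g3)).
  - now apply HM.
  - now rewrite <- (mulA hG), mulKVg.
Qed.

Variable S : G -> Prop.

Lemma lcoset_transversal_complement :
  (forall g, exists s, S s /\ same_lcoset mul inv H s g) ->
  is_complement mul S H.
Proof.
  intros hsurj. split.
  - exists one. apply hH.
  - intros g. destruct (hsurj g) as (s & Ss & Hsg).
    exists s, (mul (inv s) g). now rewrite mulKVg.
Qed.

Lemma subgroup_sub_complement (s0 : G) (W : G -> Prop) :
  S s0 -> (forall s, S s -> same_lcoset mul inv H s s0 -> s = s0) ->
  (forall x, W x -> H x) -> is_complement mul S W ->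
  forall h, H h -> W h.
Proof.
  intros Ss0 uniq sWH [_ cover] h Hh.
  destruct (cover (mul s0 h)) as (s & w & Ss & Ww & E).
  assert (Hss0 : same_lcoset mul inv H s s0).
  { apply (same_lcoset_trans (g2 := mul s w)); [now apply same_lcoset_mulr, sWH|].
    rewrite <- E. now apply same_lcoset_sym, same_lcoset_mulr. }
  rewrite (uniq s Ss Hss0) in E.
  now rewrite (mulg_cancel_l E).
Qed.

End LeftCosets.

Theorem lemma4p2 (G : Type) (mul : G -> G -> G) (one : G) (inv : G -> G)
  (hG : is_group mul one inv) (S H : G -> Prop)
  (hH : is_subgroup mul one inv H)
  (* S -> G -> G/H is surjective: every coset gH meets S *)
  (hsurj : forall g, exists s, S s /\ same_lcoset mul inv H s g)
  (* some fibre (over the coset g0 H) contains exactly one element *)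
  (hfib : exists g0 s0, S s0 /\ same_lcoset mul inv H s0 g0 /\
            forall s, S s -> same_lcoset mul inv H s g0 -> s = s0) :
  is_minimal_complement mul S H.
Proof.
  split; [exact (lcoset_transversal_complement hG hH S hsurj)|].
  intros W sWH (h & Hh & nWh) hW.
  destruct hfib as (g0 & s0 & Ss0 & Hs0g0 & uniq).
  assert (uniq_s0 : forall s, S s -> same_lcoset mul inv H s s0 -> s = s0).
  { intros s Ss Hss0. exact (uniq s Ss (same_lcoset_trans hG hH Hss0 Hs0g0)). }
  exact (nWh (subgroup_sub_complement hG hH Ss0 uniq_s0 sWH hW h Hh)).
Qed.
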